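(* Let $M$ be a commutative and cocommutative Hopf algebra over $\mathbb{C}$ and $A$ a commutative $\mathbb{C}$-algebra. Each map $\mathrm{EQ}_r$ (for $r$ an $A$-valued bicharacter on $M$) is invertible, with inverse $\mathrm{EQ}_{r^{-1}}$. Moreover, if $r_1,r_2$ are $A$-valued bicharacters on $M$ with symmetrizations $s_1,s_2$ respectively, then \[ \mathrm{EQ}_{r_2}\circ\mathrm{EQ}_{r_1^{-1}}\colon (M_A,\bullet_{s_1})\to (M_A,\bullet_{s_2}) \] is a homomorphism from the multiplication $\bullet_{s_1}$ to the multiplication $\bullet_{s_2}$.
   Context: For a Hopf algebra $M$ with coproduct $\Delta$, counit $\eta$ and antipode $S$, Sweedler notation is used: $\Delta(a)=\sum a'\otimes a''$, $\Delta^2(a)=\sum a'\otimes a''\otimes a'''$. An $A$-valued bicharacter on $M$ is a linear map $r:M\otimes M\to A$ such that for all $a,b,c\in M$: $r(1\otimes a)=\eta(a)=r(a\otimes 1)$, $r(ab\otimes c)=\sum r(a\otimes c')r(b\otimes c'')$, $r(a\otimes bc)=\sum r(a'\otimes b)r(a''\otimes c)$. Convolution: $(r\circ t)(a\otimes b)=\sum r(a'\otimes b')t(a''\otimes b'')$; $r^t(a\otimes b)=r(b\otimes a)$; the inverse bicharacter is $r^{-1}(a\otimes b)=r(S(a)\otimes b)$. The symmetrization of $r$ is $s=r\circ r^t$. $M_A=M\otimes_{\mathbb{C}}A$. For a symmetric bicharacter $t$ (i.e. $t=t^t$), $\bullet_t$ is the $A$-bilinear product on $M_A$ extending $a\bullet_t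 b=\sum a'b'\,t(a''\otimes b'')$. The map $\mathrm{EQ}_r(m)=\sum r(m'\otimes m'')m'''$ is extended $A$-linearly to $M_A\to M_A$. *)

From HB Require Import structures.
From mathcomp Require Import all_boot all_order all_algebra.
From mathcomp Require Import complex.
From mathcomp Require Import Rstruct.
Set Implicit Arguments. Unset Strict Implicit. Unset Printing Implicit Defensive.
Import Order.TTheory GRing.Theory Num.Theory.
Local Open Scope ring_scope.

Definition Cplx : fieldType := (Rdefinitions.R)[i].

Section Hopf.
Variable K : fieldType.

Definition lin (U V : lmodType K) (f : U -> V) : Prop :=
  forall (c : K) (x y : U), f (c *: x + y) = c *: f x + f y.

Definition bilin (U W V : lmodType K) (f : U -> W -> V) : Prop :=
  (forall y, lin (fun x => f x y)) /\ (forall x, lin (f x)).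

Definition trilin (U W X V : lmodType K) (f : U -> W -> X -> V) : Prop :=
  (forall y z, lin (fun x => f x y z)) /\ (forall x z, lin (fun y => f x y z))
  /\ (forall x y, lin (f x y)).

(* An element of U (x)_K W is represented by a finite list of pure tensors
   [:: (x_1, y_1); ...] standing for sum_i x_i (x) y_i.  Two representatives
   denote the same tensor iff they agree on every bilinear map to every
   K-module (universal property of the tensor product). *)
Definition tens_eq (U W : lmodType K) (t1 t2 : seq (U * W)) : Prop :=
  forall (V : lmodType K) (f : U -> W -> V), bilin f ->
    \sum_(p <- t1) f p.1 p.2 = \sum_(p <- t2) f p.1 p.2.

Variable M : comAlgType K.

(* Sweedler sum  sum f(a', a'')  for a coproduct  cop : M -> M (x) M
   given on representatives. *)
Definition swe (cop : M -> seq (M * M)) (V : lmodType K) (f : M -> M -> V) (a : M) : V :=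
  \sum_(p <- cop a) f p.1 p.2.

Record cc_hopf (cop : M -> seq (M * M)) (eps : M -> K) (S : M -> M) : Prop := {
  cop_lin : forall (V : lmodType K) (f : M -> M -> V), bilin f ->
      forall (c : K) (a b : M), swe cop f (c *: a + b) = c *: swe cop f a + swe cop f b;
  cop_coassoc : forall (V : lmodType K) (f : M -> M -> M -> V), trilin f ->
      forall a : M,
      swe cop (fun x y => swe cop (fun u v => f u v y) x) a =
      swe cop (fun x y => swe cop (fun u v => f x u v) y) a;
  eps_lin : forall (c : K) (a b : M), eps (c *: a + b) = c * eps a + eps b;
  cop_counitl : forall a : M, swe cop (fun x y => eps x *: y) a = a;
  cop_counitr : forall a : M, swe cop (fun x y => eps y *: x) a = a;
  cop_mul : forall (V : lmodType K) (f : M -> M -> V), bilin f ->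
      forall a b : M,
      swe cop f (a * b) =
      swe cop (fun a1 a2 => swe cop (fun b1 b2 => f (a1 * b1) (a2 * b2)) b) a;
  cop_one : forall (V : lmodType K) (f : M -> M -> V), bilin f ->
      swe cop f 1 = f 1 1;
  eps_mul : forall a b : M, eps (a * b) = eps a * eps b;
  eps_one : eps 1 = 1;
  S_lin : lin S;
  S_antipodel : forall a : M, swe cop (fun x y => S x * y) a = (eps a)%:A;
  S_antipoder : forall a : M, swe cop (fun x y => x * S y) a = (eps a)%:A;
  cop_cocomm : forall (V : lmodType K) (f : M -> M -> V), bilin f ->
      forall a : M, swe cop f a = swe cop (fun x y => f y x) a
}.

Variable cop : M -> seq (M * M).
Variable eps : M -> K.
Variable S : M -> M.
Variable A : comAlgType K.

(* A-valued bicharacter on M: a linear map r : M (x) M -> A, given as a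
   bilinear map M -> M -> A. *)
Definition bichar (r : M -> M -> A) : Prop :=
  [/\ bilin r,
      forall a : M, r 1 a = (eps a)%:A /\ r a 1 = (eps a)%:A,
      forall a b c : M, r (a * b) c = swe cop (fun c1 c2 => r a c1 * r b c2) c
    & forall a b c : M, r a (b * c) = swe cop (fun a1 a2 => r a1 b * r a2 c) a].

Definition conv (r t : M -> M -> A) : M -> M -> A :=
  fun a b => swe cop (fun a1 a2 => swe cop (fun b1 b2 => r a1 b1 * t a2 b2) b) a.

Definition transp (r : M -> M -> A) : M -> M -> A := fun a b => r b a.

Definition binv (r : M -> M -> A) : M -> M -> A := fun a b => r (S a) b.

Definition symz (r : M -> M -> A) : M -> M -> A := conv r (transp r).

(* Elements of M_A = M (x)_K A are represented by seq (M * A). *)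

(* m .t n = sum m'n' t(m'' (x) n''), extended A-bilinearly *)
Definition bullet (t : M -> M -> A) (u v : seq (M * A)) : seq (M * A) :=
  flatten [seq flatten [seq flatten [seq
      [seq (x.1 * y.1, t x.2 y.2 * (p.2 * q.2)) | y <- cop q.1]
    | x <- cop p.1] | q <- v] | p <- u].

(* EQ_r(m) = sum r(m' (x) m'') m''', with Delta^2 = (Delta (x) id) Delta,
   extended A-linearly *)
Definition EQ (r : M -> M -> A) (u : seq (M * A)) : seq (M * A) :=
  flatten [seq flatten [seq
      [seq (x.2, r y.1 y.2 * p.2) | y <- cop x.1]
    | x <- cop p.1] | p <- u].

End Hopf.

From HB Require Import structures.
From mathcomp Require Import all_boot all_order all_algebra.
From mathcomp Require Import ring.
Set Implicit Arguments. Unset Strict Implicit. Unset Printing Implicit Defensive.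
Import GRing.Theory.
Local Open Scope ring_scope.

(* Everything is computed in Sweedler notation and tested against bilinear maps,
   which is how [tens_eq] compares tensors.  Writing [Q_r(m) = sum r(m', m'')],
   one has [EQ_r(m) = sum Q_r(m') m''] and [Q_(r o t) = sum Q_r(m') Q_t(m'')], so
   [EQ_t o EQ_r = EQ_(r o t)]; as [r o r^-1 = r^-1 o r = eps (x) eps], the maps
   [EQ_r] and [EQ_(r^-1)] are mutually inverse.  The bicharacter axioms give
   [Q_r(ab) = sum Q_r(a') Q_r(b') s(a'', b'')] with [s = r o r^t], and from this
   [EQ_r(a .t b) = EQ_r a .(t o s) EQ_r b].  For [t = eps (x) eps], for which [.t]
   is the plain product, [EQ_r] is thus multiplicative from the plain product to
   [.s]; so [EQ_(r1^-1)] carries [.s1] back to the plain product and [EQ_r2]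
   carries that to [.s2].  Coassociativity and cocommutativity enter only through
   the invariance of the fourfold coproduct under permutations of its factors. *)

Section Linearity.
Variable K : fieldType.

Lemma lin0 (U V : lmodType K) (f : U -> V) : lin f -> f 0 = 0.
Proof.
move=> Hf; have := Hf 1 0 0; rewrite scale1r addr0 scale1r => H.
by apply: (addrI (f 0)); rewrite addr0 -H.
Qed.

Lemma linD (U V : lmodType K) (f : U -> V) : lin f -> forall x y, f (x + y) = f x + f y.
Proof. by move=> Hf x y; have := Hf 1 x y; rewrite !scale1r. Qed.

Lemma linZ (U V : lmodType K) (f : U -> V) : lin f -> forall c x, f (c *: x) = c *: f x.
Proof. by move=> Hf c x; have := Hf c x 0; rewrite !addr0 (lin0 Hf) addr0. Qed.

Lemma lin_sum (U V : lmodType K) (f : U -> V) (I : Type) (s : seq I) (F : I -> U) :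
  lin f -> f (\sum_(i <- s) F i) = \sum_(i <- s) f (F i).
Proof.
move=> Hf; elim: s => [|i s IH]; first by rewrite !big_nil (lin0 Hf).
by rewrite !big_cons (linD Hf) IH.
Qed.

Lemma lin_id (U : lmodType K) : lin (fun x : U => x).
Proof. by []. Qed.

Lemma lin_comp (U W V : lmodType K) (g : U -> W) (h : W -> V) :
  lin g -> lin h -> lin (fun x => h (g x)).
Proof. by move=> Hg Hh c x y; rewrite Hg Hh. Qed.

Lemma lin_big (U V : lmodType K) (I : Type) (s : seq I) (F : I -> U -> V) :
  (forall i, lin (F i)) -> lin (fun x => \sum_(i <- s) F i x).
Proof.
move=> HF c x y; elim: s => [|i s IH]; first by rewrite !big_nil scaler0 addr0.
by rewrite !big_cons HF IH scalerDr addrACA.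
Qed.

Lemma lin_mull (R : comAlgType K) (d : R) : lin (fun x : R => x * d).
Proof. by move=> c x y; rewrite mulrDl scalerAl. Qed.

Lemma lin_mulr (R : comAlgType K) (d : R) : lin (fun x : R => d * x).
Proof. by move=> c x y; rewrite mulrDr scalerAr. Qed.

End Linearity.

Section CocommutativeHopf.
Variables (K : fieldType) (M : comAlgType K).
Variables (cop : M -> seq (M * M)) (eps : M -> K) (S : M -> M).
Hypothesis HM : cc_hopf cop eps S.

Local Notation sw := (swe cop).

Lemma swe_map (V W : lmodType K) (h : V -> W) (g : M -> M -> V) a :
  lin h -> h (sw g a) = sw (fun x y => h (g x y)) a.
Proof. by move=> Hh; rewrite /swe (lin_sum _ _ Hh). Qed.

Lemma eq_swe (V : lmodType K) (g g' : M -> M -> V) a :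
  (forall x y, g x y = g' x y) -> sw g a = sw g' a.
Proof. by move=> H; apply: eq_bigr => p _; apply: H. Qed.

Lemma swe_exchange (V : lmodType K) (F : M -> M -> M -> M -> V) a b :
  sw (fun x y => sw (F x y) b) a = sw (fun u v => sw (fun x y => F x y u v) a) b.
Proof. exact: exchange_big. Qed.

Lemma lin_swe (V : lmodType K) (g : M -> M -> V) : bilin g -> lin (sw g).
Proof. by move=> Hg c x y; rewrite (cop_lin HM Hg). Qed.

Lemma lin_swe_fun (U V : lmodType K) (G : U -> M -> M -> V) a :
  (forall u v, lin (fun x => G x u v)) -> lin (fun x => sw (G x) a).
Proof. by move=> HG; apply: lin_big => p; apply: HG. Qed.

(* [swe3 g a = sum g a' a'' a'''] and [swe4 g a = sum g a' a'' a''' a''''],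
   with the iterated coproducts nested to the right. *)
Definition swe3 (V : lmodType K) (g : M -> M -> M -> V) a :=
  sw (fun x1 y => sw (g x1) y) a.

Definition swe4 (V : lmodType K) (g : M -> M -> M -> M -> V) a :=
  sw (fun x1 y => swe3 (g x1) y) a.

Ltac solve_lin :=
  cbv beta delta [swe4 swe3];
  first
  [ exact: lin_id
  | solve [ match goal with H : _ |- _ => apply H end ]
  | match goal with
    | |- lin (fun x => swe _ (@?G x) ?a) => refine (@lin_swe_fun _ _ G a _); intros ??; solve_lin
    | |- lin (swe _ ?g) => apply: lin_swe; split; intros ?; solve_lin
    | |- lin S => exact: (S_lin HM)
    | |- lin (fun x => ?h x) => change (lin h); solve_lin
    | |- lin (fun x => x * ?c) => exact: lin_mull
    | |- lin (fun x => ?c * x) => exact: lin_mulr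
    | |- lin ( *%R ?d) => exact: lin_mulr
    | |- lin (fun x => ?F x ?c) => match goal with H : bilin F |- _ => exact: (proj1 H c) end
    | |- lin (fun x => ?F ?c x) => match goal with H : bilin F |- _ => exact: (proj2 H c) end
    | |- lin (?F ?c) => match goal with H : bilin F |- _ => exact: (proj2 H c) end
    | |- lin (fun x => ?h (@?E x)) =>
        lazymatch E with (fun x => x) => fail | _ => idtac end;
        apply: (@lin_comp _ _ _ _ E h); solve_lin
    | |- lin (fun x => ?F (@?E x) ?c) =>
        lazymatch E with (fun x => x) => fail | _ => idtac end;
        apply: (@lin_comp _ _ _ _ E (fun y => F y c)); solve_lin
    end ].

Ltac solve_multilin := repeat split; intros; solve_lin.

Definition quadlin (V : lmodType K) (g : M -> M -> M -> M -> V) : Prop :=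
  [/\ forall x2 x3 x4, lin (fun x => g x x2 x3 x4), forall x1 x3 x4, lin (fun x => g x1 x x3 x4),
      forall x1 x2 x4, lin (fun x => g x1 x2 x x4) & forall x1 x2 x3, lin (g x1 x2 x3)].

Lemma eq_swe4 (V : lmodType K) (g g' : M -> M -> M -> M -> V) a :
  (forall x1 x2 x3 x4, g x1 x2 x3 x4 = g' x1 x2 x3 x4) -> swe4 g a = swe4 g' a.
Proof. by move=> H; do 3 apply: eq_swe => ? ?; apply: H. Qed.

Lemma swe3_coassoc (V : lmodType K) (g : M -> M -> M -> V) a : trilin g ->
  sw (fun y x3 => sw (fun x1 x2 => g x1 x2 x3) y) a = swe3 g a.
Proof. by move=> Hg; rewrite (cop_coassoc HM Hg). Qed.

Lemma swe3_swap23 (V : lmodType K) (g : M -> M -> M -> V) a : trilin g ->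
  swe3 g a = swe3 (fun x1 x2 x3 => g x1 x3 x2) a.
Proof.
move=> [H1 [H2 H3]]; apply: eq_swe => x1 y.
by apply: (cop_cocomm HM); solve_multilin.
Qed.

Lemma swe3_swap12 (V : lmodType K) (g : M -> M -> M -> V) a : trilin g ->
  swe3 g a = swe3 (fun x1 x2 x3 => g x2 x1 x3) a.
Proof.
move=> [H1 [H2 H3]].
rewrite -!swe3_coassoc; try solve_multilin.
by apply: eq_swe => y x3; apply: (cop_cocomm HM); solve_multilin.
Qed.

Lemma swe4_swap12 (V : lmodType K) (g : M -> M -> M -> M -> V) a : quadlin g ->
  swe4 g a = swe4 (fun x1 x2 x3 x4 => g x2 x1 x3 x4) a.
Proof.
case=> H1 H2 H3 H4.
by rewrite [LHS](@swe3_swap12 _ (fun x1 x2 y => sw (g x1 x2) y)) //; solve_multilin.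
Qed.

Lemma swe4_swap23 (V : lmodType K) (g : M -> M -> M -> M -> V) a : quadlin g ->
  swe4 g a = swe4 (fun x1 x2 x3 x4 => g x1 x3 x2 x4) a.
Proof.
case=> H1 H2 H3 H4; apply: eq_swe => x1 y.
by rewrite swe3_swap12 //; solve_multilin.
Qed.

Lemma swe4_swap34 (V : lmodType K) (g : M -> M -> M -> M -> V) a : quadlin g ->
  swe4 g a = swe4 (fun x1 x2 x3 x4 => g x1 x2 x4 x3) a.
Proof.
case=> H1 H2 H3 H4; apply: eq_swe => x1 y.
by rewrite swe3_swap23 //; solve_multilin.
Qed.

Lemma swe4_balanced (V : lmodType K) (g : M -> M -> M -> M -> V) a : quadlin g ->
  sw (fun x y => sw (fun x1 x2 => sw (g x1 x2) y) x) a = swe4 g a.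
Proof.
case=> H1 H2 H3 H4.
by rewrite (@swe3_coassoc _ (fun x1 x2 y => sw (g x1 x2) y)) //; solve_multilin.
Qed.

Lemma swe4_left (V : lmodType K) (g : M -> M -> M -> M -> V) a : quadlin g ->
  sw (fun x y => sw (fun x1 x2 => sw (fun x11 x12 => g x11 x12 x2 y) x1) x) a = swe4 g a.
Proof.
move=> Hg; have [H1 H2 H3 H4] := Hg.
rewrite (@swe3_coassoc _ (fun x1 x2 y => sw (fun x11 x12 => g x11 x12 x2 y) x1));
  last by solve_multilin.
rewrite -swe4_balanced //; apply: eq_swe => x1 y.
exact: swe_exchange.
Qed.

Lemma quadlin_swe4 (V : lmodType K) (F : M -> M -> M -> M -> M -> M -> M -> M -> V) b :
  (forall y1 y2 y3 y4, quadlin (fun x1 x2 x3 x4 => F x1 x2 x3 x4 y1 y2 y3 y4)) ->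
  quadlin (fun x1 x2 x3 x4 => swe4 (F x1 x2 x3 x4) b).
Proof.
move=> HF; split=> *; cbv beta delta [swe4 swe3];
do 3 (match goal with |- lin (fun x => swe _ (@?G x) ?c) =>
        refine (@lin_swe_fun _ _ G c _); intros ?? end);
match goal with |- lin (fun x => F _ _ _ _ ?y1 ?y2 ?y3 ?y4) =>
  case: (HF y1 y2 y3 y4) => *; solve_lin end.
Qed.

(* Iterated coproducts of [a (x) b] in [M (x) M] split into iterated coproducts
   of [a] and of [b]; one lemma for each bracketing met below. *)
Lemma swe4_pair (V : lmodType K) (F : M -> M -> M -> M -> M -> M -> M -> M -> V) a b :
  (forall y1 y2 y3 y4, quadlin (fun x1 x2 x3 x4 => F x1 x2 x3 x4 y1 y2 y3 y4)) ->
  (forall x1 x2 x3 x4, quadlin (F x1 x2 x3 x4)) ->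
  sw (fun a1 a2 => sw (fun b1 b2 => sw (fun x1 x2 => sw (fun y1 y2 =>
    sw (fun x3 x4 => sw (fun y3 y4 => F x1 x2 x3 x4 y1 y2 y3 y4) b2) a2) b1) a1) b) a
  = swe4 (fun x1 x2 x3 x4 => swe4 (F x1 x2 x3 x4) b) a.
Proof.
move=> HFx HFy; rewrite -swe4_balanced; last exact: quadlin_swe4.
apply: eq_swe => a1 a2; rewrite swe_exchange; apply: eq_swe => x1 x2.
under [RHS]eq_swe => x3 x4 do rewrite -swe4_balanced //.
rewrite [RHS]swe_exchange; apply: eq_swe => b1 b2.
by rewrite [RHS]swe_exchange.
Qed.

Lemma swe4_pair_left (V : lmodType K) (F : M -> M -> M -> M -> M -> M -> M -> M -> V) a b :
  (forall y1 y2 y3 y4, quadlin (fun x1 x2 x3 x4 => F x1 x2 x3 x4 y1 y2 y3 y4)) ->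
  (forall x1 x2 x3 x4, quadlin (F x1 x2 x3 x4)) ->
  sw (fun a1 a2 => sw (fun b1 b2 => sw (fun x1 x2 => sw (fun y1 y2 =>
    sw (fun x11 x12 => sw (fun y11 y12 => F x11 x12 x2 a2 y11 y12 y2 b2) y1) x1) b1) a1) b) a
  = swe4 (fun x1 x2 x3 x4 => swe4 (F x1 x2 x3 x4) b) a.
Proof.
move=> HFx HFy; rewrite -swe4_left; last exact: quadlin_swe4.
apply: eq_swe => a1 a2; rewrite swe_exchange; apply: eq_swe => x1 x2.
under [RHS]eq_swe => x11 x12 do rewrite -swe4_left //.
rewrite [RHS]swe_exchange; apply: eq_swe => b1 b2.
by rewrite [RHS]swe_exchange.
Qed.

Lemma swe4_pair_right (V : lmodType K) (F : M -> M -> M -> M -> M -> M -> M -> M -> V) a b :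
  sw (fun a1 a2 => sw (fun b1 b2 => sw (fun x2 x3 => sw (fun y2 y3 =>
    sw (fun x31 x32 => sw (fun y31 y32 => F a1 x2 x31 x32 b1 y2 y31 y32) y3) x3) b2) a2) b) a
  = swe4 (fun x1 x2 x3 x4 => swe4 (F x1 x2 x3 x4) b) a.
Proof.
apply: eq_swe => a1 a2; rewrite swe_exchange; apply: eq_swe => x2 x3.
rewrite [RHS]swe_exchange; apply: eq_swe => b1 b2.
by rewrite [RHS]swe_exchange.
Qed.

Lemma swe_counitl (V : lmodType K) (h : M -> V) a :
  lin h -> sw (fun x y => eps x *: h y) a = h a.
Proof.
move=> Hh; rewrite -{2}(cop_counitl HM a) (swe_map _ _ Hh).
by apply: eq_swe => x y; rewrite (linZ Hh).
Qed.

Variable A : comAlgType K.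

Lemma swe_mull (F : M -> M -> A) a c : sw F a * c = sw (fun x y => F x y * c) a.
Proof. by rewrite (swe_map (h := fun z => z * c)) //; exact: lin_mull. Qed.

Lemma swe_mulr (F : M -> M -> A) a c : c * sw F a = sw (fun x y => c * F x y) a.
Proof. by rewrite (swe_map (h := fun z => c * z)) //; exact: lin_mulr. Qed.

Lemma mul_swe (F G : M -> M -> A) a b :
  sw F a * sw G b = sw (fun a1 a2 => sw (fun b1 b2 => F a1 a2 * G b1 b2) b) a.
Proof. by rewrite swe_mull; apply: eq_swe => a1 a2; rewrite swe_mulr. Qed.

Definition counit2 (a b : M) : A := (eps a * eps b)%:A.

Lemma bilin_counit2 : bilin counit2.
Proof.
rewrite /counit2; split => z c x y; rewrite (eps_lin HM).
  by rewrite mulrDl scalerDl scalerA mulrA.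
by rewrite mulrDr scalerDl scalerA mulrCA.
Qed.

Lemma swe_counit2 a : sw counit2 a = (eps a)%:A.
Proof.
rewrite -[RHS](swe_counitl (h := fun y => (eps y)%:A)).
  by apply: eq_swe => x y; rewrite /counit2 scalerA.
by move=> c x y; rewrite (eps_lin HM) scalerDl scalerA.
Qed.

Lemma bichar_bilin (r : M -> M -> A) : bichar cop eps r -> bilin r.
Proof. by case. Qed.

Lemma bilin_binv (r : M -> M -> A) : bilin r -> bilin (binv S r).
Proof. by move=> Hr; rewrite /binv; solve_multilin. Qed.

Lemma bilin_conv (r t : M -> M -> A) : bilin r -> bilin t -> bilin (conv cop r t).
Proof. by move=> Hr Ht; rewrite /conv; solve_multilin. Qed.

Lemma bilin_symz (r : M -> M -> A) : bilin r -> bilin (symz cop r).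
Proof. by move=> [Hr1 Hr2]; apply: bilin_conv. Qed.

Lemma conv_counit2l (t : M -> M -> A) a b : bilin t -> conv cop counit2 t a b = t a b.
Proof.
move=> Ht; rewrite /conv /counit2.
rewrite -[RHS](swe_counitl (h := fun x => t x b)); last by solve_lin.
apply: eq_swe => a1 a2.
rewrite -(swe_counitl (h := t a2)); last by solve_lin.
rewrite (swe_map (h := fun z => eps a1 *: z)); last first.
  by move=> c x y; rewrite scalerDr !scalerA mulrC.
by apply: eq_swe => b1 b2; rewrite mulr_algl !scalerA.
Qed.

Lemma conv_binvr (r : M -> M -> A) a b :
  bichar cop eps r -> conv cop r (binv S r) a b = counit2 a b.
Proof.
case=> Hr Hu Hm _; rewrite /conv /binv.
under eq_swe => a1 a2 do rewrite -Hm.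
rewrite -(swe_map (h := fun z => r z b)); last by solve_lin.
rewrite (S_antipoder HM) (linZ (proj1 Hr b) _ 1).
by case: (Hu b) => -> _; rewrite scalerA.
Qed.

Lemma conv_binvl (r : M -> M -> A) a b :
  bichar cop eps r -> conv cop (binv S r) r a b = counit2 a b.
Proof.
case=> Hr Hu Hm _; rewrite /conv /binv.
under eq_swe => a1 a2 do rewrite -Hm.
rewrite -(swe_map (h := fun z => r z b)); last by solve_lin.
rewrite (S_antipodel HM) (linZ (proj1 Hr b) _ 1).
by case: (Hu b) => -> _; rewrite scalerA.
Qed.

Lemma swe_bichar_mul (r : M -> M -> A) a b : bichar cop eps r ->
  sw r (a * b) = sw (fun a1 a2 => sw (fun b1 b2 => sw r a1 * sw r b1 * symz cop r a2 b2) b) a.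
Proof.
case=> Hr _ Hml Hmr; have [Hr1 Hr2] := Hr.
rewrite (cop_mul HM Hr).
transitivity (sw (fun a1 a2 => sw (fun b1 b2 => sw (fun x1 x2 => sw (fun y1 y2 =>
    sw (fun x3 x4 => sw (fun y3 y4 => r x1 x3 * r y1 x4 * (r x2 y3 * r y2 y4)) b2) a2)
    b1) a1) b) a).
  apply: eq_swe => a1 a2; apply: eq_swe => b1 b2.
  rewrite Hmr (cop_mul HM); last by solve_multilin.
  by apply: eq_swe => x1 x2; apply: eq_swe => y1 y2; rewrite !Hml mul_swe.
transitivity (sw (fun a1 a2 => sw (fun b1 b2 => sw (fun x1 x2 => sw (fun y1 y2 =>
    sw (fun x3 x4 => sw (fun y3 y4 => r x1 x2 * r y1 y2 * (r x3 y3 * r y4 x4)) b2) a2)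
    b1) a1) b) a); last first.
  apply: eq_swe => a1 a2; apply: eq_swe => b1 b2.
  rewrite /symz /conv /transp mul_swe swe_mull; apply: eq_swe => x1 x2.
  rewrite swe_mull; apply: eq_swe => y1 y2.
  by rewrite swe_mulr; apply: eq_swe => x3 x4; rewrite swe_mulr.
rewrite !swe4_pair; try by move=> *; solve_multilin.
rewrite [LHS]swe4_swap23; last by solve_multilin.
apply: eq_swe4 => x1 x2 x3 x4.
rewrite [LHS]swe4_swap12; last by solve_multilin.
rewrite [LHS]swe4_swap23; last by solve_multilin.
rewrite [LHS]swe4_swap34; last by solve_multilin.
rewrite [LHS]swe4_swap23; last by solve_multilin.
by apply: eq_swe4 => y1 y2 y3 y4; ring.
Qed.

Lemma swe_conv (r t : M -> M -> A) a : bilin r -> bilin t ->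
  sw (conv cop r t) a = sw (fun x y => sw r x * sw t y) a.
Proof.
move=> [Hr1 Hr2] [Ht1 Ht2].
under [RHS]eq_swe => x y do rewrite mul_swe.
rewrite [RHS]swe4_balanced; last by solve_multilin.
rewrite /conv [LHS]swe4_balanced; last by solve_multilin.
by rewrite swe4_swap23 //; solve_multilin.
Qed.

Lemma swe_EQ_bullet (V : lmodType K) (f : M -> A -> V) (r t : M -> M -> A) a b :
  bilin f -> bichar cop eps r -> bilin t ->
  sw (fun a1 a2 => sw (fun b1 b2 =>
    sw (fun w1 w2 => f w2 (sw r w1 * t a2 b2)) (a1 * b1)) b) a
  = sw (fun a1 a2 => sw (fun b1 b2 => sw (fun x1 x2 => sw (fun y1 y2 =>
    f (x1 * y1) (sw r a1 * sw r b1 * conv cop t (symz cop r) x2 y2)) b2) a2) b) a.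
Proof.
move=> [Hf1 Hf2] Hr [Ht1 Ht2]; have [Hr1 Hr2] := bichar_bilin Hr.
have [Hs1 Hs2] := bilin_symz (bichar_bilin Hr).
transitivity (sw (fun a1 a2 => sw (fun b1 b2 => sw (fun x1 x2 => sw (fun y1 y2 =>
    sw (fun x11 x12 => sw (fun y11 y12 =>
      f (x2 * y2) (sw r x11 * sw r y11 * symz cop r x12 y12 * t a2 b2)) y1) x1) b1) a1) b) a).
  apply: eq_swe => a1 a2; apply: eq_swe => b1 b2.
  rewrite (cop_mul HM); last by solve_multilin.
  apply: eq_swe => x1 x2; apply: eq_swe => y1 y2.
  rewrite swe_bichar_mul // swe_mull (swe_map (h := f (x2 * y2))) //.
  by apply: eq_swe => x11 x12; rewrite swe_mull (swe_map (h := f (x2 * y2))).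
transitivity (sw (fun a1 a2 => sw (fun b1 b2 => sw (fun x2 x3 => sw (fun y2 y3 =>
    sw (fun x31 x32 => sw (fun y31 y32 =>
      f (x2 * y2) (sw r a1 * sw r b1 * (t x31 y31 * symz cop r x32 y32))) y3) x3) b2) a2) b) a);
  last first.
  apply: eq_swe => a1 a2; apply: eq_swe => b1 b2.
  apply: eq_swe => x2 x3; apply: eq_swe => y2 y3.
  rewrite /conv (swe_mulr _ _ (sw r a1 * sw r b1)) (swe_map (h := f (x2 * y2))) //.
  apply: eq_swe => x31 x32.
  by rewrite (swe_mulr _ _ (sw r a1 * sw r b1)) (swe_map (h := f (x2 * y2))).
rewrite swe4_pair_left ?swe4_pair_right; try by move=> *; solve_multilin.
rewrite [LHS]swe4_swap23; last by solve_multilin.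
rewrite [LHS]swe4_swap34; last by solve_multilin.
apply: eq_swe4 => x1 x2 x3 x4.
rewrite [LHS]swe4_swap23; last by solve_multilin.
rewrite [LHS]swe4_swap34; last by solve_multilin.
by apply: eq_swe4 => y1 y2 y3 y4; congr (f _ _); ring.
Qed.

Lemma sum_EQ (V : lmodType K) (h : M -> A -> V) (r : M -> M -> A) u :
  (forall m, lin (h m)) -> bilin r ->
  \sum_(z <- EQ cop r u) h z.1 z.2 = \sum_(p <- u) sw (fun x1 x2 => h x2 (sw r x1 * p.2)) p.1.
Proof.
move=> Hh [Hr1 Hr2].
rewrite /EQ big_flatten /= big_map; apply: eq_bigr => p _.
rewrite big_flatten big_map /swe; apply: eq_bigr => x _.
rewrite big_map /=; rewrite (lin_sum _ _ (lin_comp (lin_mull p.2) (Hh x.2))).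
by apply: eq_bigr.
Qed.

Lemma sum_bullet (V : lmodType K) (h : M -> A -> V) (t : M -> M -> A) u v :
  \sum_(z <- bullet cop t u v) h z.1 z.2 =
  \sum_(p <- u) \sum_(q <- v)
     sw (fun x1 x2 => sw (fun y1 y2 => h (x1 * y1) (t x2 y2 * (p.2 * q.2))) q.1) p.1.
Proof.
rewrite /bullet big_flatten /= big_map; apply: eq_bigr => p _.
rewrite big_flatten big_map; apply: eq_bigr => q _.
rewrite big_flatten big_map /swe; apply: eq_bigr => x _.
by rewrite big_map.
Qed.

Lemma tens_eq_sym (u v : seq (M * A)) : tens_eq u v -> tens_eq v u.
Proof. by move=> H V f Hf; rewrite H. Qed.

Lemma tens_eq_trans (u v w : seq (M * A)) : tens_eq u v -> tens_eq v w -> tens_eq u w.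
Proof. by move=> H1 H2 V f Hf; rewrite H1 // H2. Qed.

Lemma tens_eq_EQ (r : M -> M -> A) u u' :
  bilin r -> tens_eq u u' -> tens_eq (EQ cop r u) (EQ cop r u').
Proof.
move=> Hr H V f [Hf1 Hf2]; rewrite !sum_EQ //.
by apply: (H V (fun m c => sw (fun x1 x2 => f x2 (sw r x1 * c)) m)); solve_multilin.
Qed.

Lemma tens_eq_bullet (t : M -> M -> A) u u' v v' : bilin t ->
  tens_eq u u' -> tens_eq v v' -> tens_eq (bullet cop t u v) (bullet cop t u' v').
Proof.
move=> [Ht1 Ht2] Hu Hv V f [Hf1 Hf2]; rewrite !sum_bullet.
pose G m c n d := sw (fun x1 x2 => sw (fun y1 y2 => f (x1 * y1) (t x2 y2 * (c * d))) n) m.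
transitivity (\sum_(p <- u') \sum_(q <- v) G p.1 p.2 q.1 q.2).
  apply: (Hu V (fun m c => \sum_(q <- v) G m c q.1 q.2)).
  by split=> ?; apply: lin_big => q; rewrite /G; solve_lin.
rewrite exchange_big [RHS]exchange_big.
apply: (Hv V (fun n d => \sum_(p <- u') G p.1 p.2 n d)).
by split=> ?; apply: lin_big => p; rewrite /G; solve_lin.
Qed.

Lemma eq_EQ (r r' : M -> M -> A) u :
  (forall a b, r a b = r' a b) -> EQ cop r u = EQ cop r' u.
Proof.
move=> H; rewrite /EQ; congr flatten; apply: eq_map => p.
congr flatten; apply: eq_map => x; apply: eq_map => y.
by rewrite H.
Qed.

Lemma eq_bullet (t t' : M -> M -> A) u v :
  (forall a b, t a b = t' a b) -> bullet cop t u v = bullet cop t' u v.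
Proof.
move=> H; rewrite /bullet; congr flatten; apply: eq_map => p.
congr flatten; apply: eq_map => q; congr flatten; apply: eq_map => x.
by apply: eq_map => y; rewrite H.
Qed.

Lemma EQ_comp (r t : M -> M -> A) u : bilin r -> bilin t ->
  tens_eq (EQ cop t (EQ cop r u)) (EQ cop (conv cop r t) u).
Proof.
move=> Hr Ht V f [Hf1 Hf2]; have [Hr1 Hr2] := Hr; have [Ht1 Ht2] := Ht.
rewrite sum_EQ // (sum_EQ (h := fun m c => sw (fun x1 x2 => f x2 (sw t x1 * c)) m)) //;
  last by move=> m; solve_lin.
rewrite sum_EQ //; last exact: bilin_conv.
apply: eq_bigr => p _.
transitivity (swe3 (fun x1 y1 y2 => f y2 (sw t y1 * (sw r x1 * p.2))) p.1) => //.
rewrite -swe3_coassoc; last by solve_multilin.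
apply: eq_swe => y y2; rewrite swe_conv // swe_mull (swe_map (h := f y2)) //.
by apply: eq_swe => x1 y1; rewrite mulrCA mulrA.
Qed.

Lemma EQ_counit (r : M -> M -> A) u :
  (forall a b, r a b = counit2 a b) -> tens_eq (EQ cop r u) u.
Proof.
move=> Hr V f [Hf1 Hf2]; rewrite (eq_EQ _ Hr) sum_EQ //; last exact: bilin_counit2.
apply: eq_bigr => p _; rewrite -[RHS](swe_counitl (h := f^~ p.2)) //.
by apply: eq_swe => x1 x2; rewrite swe_counit2 mulr_algl (linZ (Hf2 x2)).
Qed.

Lemma EQ_bullet (r t : M -> M -> A) u v : bichar cop eps r -> bilin t ->
  tens_eq (EQ cop r (bullet cop t u v))
          (bullet cop (conv cop t (symz cop r)) (EQ cop r u) (EQ cop r v)).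
Proof.
move=> Hr Ht V f Hf; have [Hf1 Hf2] := Hf; have [Ht1 Ht2] := Ht.
have Hb := bichar_bilin Hr; have [Hr1 Hr2] := Hb.
have [Hc1 Hc2] := bilin_conv Ht (bilin_symz Hb).
pose G (p' q' : M * A) := sw (fun x1 x2 => sw (fun y1 y2 =>
  f (x1 * y1) (conv cop t (symz cop r) x2 y2 * (p'.2 * q'.2))) q'.1) p'.1.
rewrite sum_EQ // (sum_bullet (fun m c => sw (fun w1 w2 => f w2 (sw r w1 * c)) m)).
rewrite sum_bullet -/(G _ _).
transitivity (\sum_(p' <- EQ cop r u) \sum_(q <- v)
    sw (fun b1 b2 => G p' (b2, sw r b1 * q.2)) q.1); last first.
  apply: eq_bigr => p' _; rewrite (sum_EQ (h := fun n d => G p' (n, d))) //.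
  by move=> n; rewrite /G /=; solve_lin.
rewrite [RHS]exchange_big /=.
transitivity (\sum_(q <- v) \sum_(p <- u) sw (fun a1 a2 => sw (fun b1 b2 =>
    G (a2, sw r a1 * p.2) (b2, sw r b1 * q.2)) q.1) p.1); last first.
  apply: eq_bigr => q _.
  rewrite (sum_EQ (h := fun m c => sw (fun b1 b2 => G (m, c) (b2, sw r b1 * q.2)) q.1)) //.
  by move=> m; rewrite /G /=; solve_lin.
rewrite exchange_big /=; apply: eq_bigr => [[b be]] _; apply: eq_bigr => [[a al]] _ /=.
pose f' m c := f m (c * (al * be)).
transitivity (sw (fun a1 a2 => sw (fun b1 b2 =>
    sw (fun w1 w2 => f' w2 (sw r w1 * t a2 b2)) (a1 * b1)) b) a).
  by do 3 (apply: eq_swe => ? ?); rewrite /f' -mulrA.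
rewrite swe_EQ_bullet //; last by rewrite /f'; solve_multilin.
do 4 (apply: eq_swe => ? ?); rewrite /f' /G /=; congr (f _ _); ring.
Qed.

Lemma EQ_mul (r : M -> M -> A) u v : bichar cop eps r ->
  tens_eq (EQ cop r (bullet cop counit2 u v))
          (bullet cop (symz cop r) (EQ cop r u) (EQ cop r v)).
Proof.
move=> Hr; have Hs := bilin_symz (bichar_bilin Hr).
rewrite -(eq_bullet _ _ (fun a b => conv_counit2l a b Hs)).
exact: EQ_bullet Hr bilin_counit2.
Qed.

Lemma EQ_binvK (r : M -> M -> A) u :
  bichar cop eps r -> tens_eq (EQ cop (binv S r) (EQ cop r u)) u.
Proof.
move=> Hr; have Hb := bichar_bilin Hr.
apply: tens_eq_trans (EQ_comp _ Hb (bilin_binv Hb)) (EQ_counit _ _) => a b.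
exact: conv_binvr.
Qed.

Lemma EQ_binvVK (r : M -> M -> A) u :
  bichar cop eps r -> tens_eq (EQ cop r (EQ cop (binv S r) u)) u.
Proof.
move=> Hr; have Hb := bichar_bilin Hr.
apply: tens_eq_trans (EQ_comp _ (bilin_binv Hb) Hb) (EQ_counit _ _) => a b.
exact: conv_binvl.
Qed.

Lemma EQ_binv_mul (r : M -> M -> A) u v : bichar cop eps r ->
  tens_eq (EQ cop (binv S r) (bullet cop (symz cop r) u v))
          (bullet cop counit2 (EQ cop (binv S r) u) (EQ cop (binv S r) v)).
Proof.
move=> Hr; have Hb := bichar_bilin Hr.
set X := bullet cop counit2 _ _.
apply: tens_eq_trans (EQ_binvK X Hr); apply: tens_eq_EQ; first exact: bilin_binv.
apply: tens_eq_sym; apply: tens_eq_trans (EQ_mul _ _ Hr) _.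
by apply: tens_eq_bullet (EQ_binvVK _ Hr) (EQ_binvVK _ Hr); exact: bilin_symz.
Qed.

End CocommutativeHopf.

Theorem corollary2p8
  (M : comAlgType Cplx) (cop : M -> seq (M * M)) (eps : M -> Cplx) (S : M -> M)
  (HM : cc_hopf cop eps S) (A : comAlgType Cplx) :
  (forall r : M -> M -> A, bichar cop eps r ->
     (forall u : seq (M * A), tens_eq (EQ cop (binv S r) (EQ cop r u)) u) /\
     (forall u : seq (M * A), tens_eq (EQ cop r (EQ cop (binv S r) u)) u)) /\
  (forall r1 r2 : M -> M -> A, bichar cop eps r1 -> bichar cop eps r2 ->
     forall u v : seq (M * A),
       tens_eq (EQ cop r2 (EQ cop (binv S r1) (bullet cop (symz cop r1) u v)))
               (bullet cop (symz cop r2)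
                  (EQ cop r2 (EQ cop (binv S r1) u))
                  (EQ cop r2 (EQ cop (binv S r1) v)))).
Proof.
split=> [r Hr | r1 r2 Hr1 Hr2 u v].
  by split=> u; [exact: (EQ_binvK HM) | exact: (EQ_binvVK HM)].
apply: tens_eq_trans _ (EQ_mul HM _ _ Hr2).
apply: (tens_eq_EQ HM (bichar_bilin Hr2)).
exact: (EQ_binv_mul HM).
Qed.
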